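(* For any formal series $\hat\psi(\hbar^2,y)$, $\hat y(\hbar^2,z)$ with $\hat\psi(\hbar^2,0)=\hat y(\hbar^2,0)=0$, and all $g\ge0$, $n\ge1$, $$2!\,[\hbar^{2g-2+n}u^2]\,\mathcal{T}_n(z_1;z_2,\dots,z_n;u)=W_{g-1,n+1}(z_1,z_1,z_2,\dots,z_n)+\sum_{\substack{g_1+g_2=g\\ I\sqcup J=\{2,\dots,n\}}}W_{g_1,|I|+1}(z_1,z_I)W_{g_2,|J|+1}(z_1,z_J),$$ where a factor $W_{0,2}$ with two equal arguments is replaced by $D_1D_2H_{0,2}$ on the diagonal.
   Context: $Z_{\hat\psi,\hat y}=\sum_\lambda s_\lambda(p)s_\lambda(\hat y_1/\hbar,\hat y_2/\hbar,\dots)\exp(\sum_{(i,j)\in\lambda}\hat\psi(\hbar^2,\hbar(i-j)))$, $\hat y=\sum\hat y_iz^i$, Schur functions in power sums; $H_{g,n}=\sum_{k_i\ge1}([\hbar^{2g-2+n}]\partial^n\log Z/\partial p_{k_1}\cdots\partial p_{k_n}|_{p=0})\prod X_i^{k_i}$; $\psi=\hat\psi(0,\cdot)$, $y=\hat y(0,\cdot)$, $X(z)=ze^{-\psi(y(z))}$ (formal change of variables at $0$), $Q=1-zy'\psi'(y)$, $D_i=X_i\partial_{X_i}=Q(z_i)^{-1}z_i\partial_{z_i}$; $W_{g,n}=D_1\cdots D_nH_{g,n}$ for $(g,n)\ne(0,2)$, $W_{0,2}=D_1D_2H_{0,2}+X_1X_2/(X_1-X_2)^2$, $W$ with negative genus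 is $0$; $W_n=\sum_g\hbar^{2g-2+n}W_{g,n}$; $\mathcal{S}(u)=(e^{u/2}-e^{-u/2})/u$. $T_n(z_1;z_2,\dots,z_n;u)=\sum_{k\ge1}\frac1{k!}\big(\prod_{i=1}^k|_{z_{\bar i}=z_1}u\hbar\mathcal{S}(u\hbar D_{\bar i})\big)W_{k+n-1}(z_{\bar1},\dots,z_{\bar k},z_2,\dots,z_n)$ (operators applied in auxiliary variables $z_{\bar i}$, then $z_{\bar i}=z_1$; any $W_{0,2}$ factor with two barred arguments is replaced by $DDH_{0,2}$), and $\mathcal{T}_n=\frac{\mathcal{S}(u\hbar D_1)}{\hbar\mathcal{S}(u\hbar)}\sum_{l\ge1}\frac1{l!}\sum_{J_1\sqcup\dots\sqcup J_l=\{2,\dots,n\}}\prod_{i=1}^lT_{|J_i|+1}(z_1;z_{J_i};u)$ (ordered decompositions, parts possibly empty). *)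

(* Formal-series framework for Lemma 2.18.
   All formal series are represented by their coefficient functions; every
   product is the Cauchy product, written as the finite sum it reduces to. *)
From HB Require Import structures.
From mathcomp Require Import all_boot all_order all_fingroup all_algebra.
Set Implicit Arguments. Unset Strict Implicit. Unset Printing Implicit Defensive.
Import Order.TTheory GRing.Theory Num.Theory.
Local Open Scope ring_scope.

Fixpoint box (s : seq nat) : seq (seq nat) :=
  if s is a :: s' then [seq i :: t | i <- iota 0 a.+1, t <- box s'] else [:: [::]].
Fixpoint comps (l t : nat) : seq (seq nat) :=
  if l is l'.+1 then [seq i :: c | i <- iota 0 t.+1, c <- comps l' (t - i)]
  else if t == 0%N then [:: [::]] else [::].
Fixpoint tuples (l len : nat) : seq (seq nat) :=
  if len is len'.+1 then [seq i :: t | i <- iota 0 l, t <- tuples l len'] else [:: [::]].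
Definition bitseqs (len : nat) : seq bitseq :=
  [seq [seq i == 1%N | i <- t] | t <- tuples 2 len].
Definition icc (lo hi : int) : seq int :=
  if hi < lo then [::] else [seq lo + (i%:Z) | i <- iota 0 (absz (hi - lo)).+1].
Fixpoint partsb (fuel b d : nat) : seq (seq nat) :=
  if d == 0%N then [:: [::]] else
  if fuel is fuel'.+1 then
    flatten [seq [seq p :: l | l <- partsb fuel' p (d - p)] | p <- iota 1 (minn b d)]
  else [::].
Definition partitions (d : nat) : seq (seq nat) := partsb d d d.
Definition vsub (a b : seq nat) : seq nat := [seq (p.1 - p.2)%N | p <- zip a b].
Definition nonzerov (nu : seq nat) : bool := has (fun a => a != 0%N) nu.
Definition sumz (s : seq int) : int := foldr +%R 0 s.

Section Defs.
Variable K : fieldType.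

(* Univariate formal power series  f : nat -> K  (f r = [t^r] f)        *)
Definition smul (f g : nat -> K) (r : nat) : K := \sum_(i < r.+1) f i * g (r - i)%N.
Fixpoint spow (f : nat -> K) (m : nat) : nat -> K :=
  if m is m'.+1 then smul f (spow f m') else (fun r => (r == 0%N)%:R).
(* exp f, for f with zero constant term *)
Definition sexp (f : nat -> K) (r : nat) : K :=
  \sum_(m < r.+1) (m`!%:R)^-1 * spow f m r.

(* Polynomials in the power sums p_1,...,p_D: a monomial p^nu is given by
   its multiplicity vector nu (nu_j = multiplicity of p_{j+1}).          *)
Definition weight (nu : seq nat) : nat := \sum_(j < size nu) (j.+1 * nth 0%N nu j)%N.
Definition cnt (nu : seq nat) : nat := sumn nu.
Definition zee (nu : seq nat) : K :=
  (\prod_(j < size nu) (j.+1 ^ nth 0%N nu j * (nth 0%N nu j)`!))%N%:R.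
(* complete homogeneous h_r = sum_{|nu|=r} p_nu / z_nu, coefficient of p^nu *)
Definition hc (r : int) (nu : seq nat) : K :=
  if (weight nu)%:Z == r then (zee nu)^-1 else 0.
Fixpoint pprod (fs : seq (seq nat -> K)) (nu : seq nat) : K :=
  if fs is f :: fs' then \sum_(nu1 <- box nu) f nu1 * pprod fs' (vsub nu nu1)
  else (~~ nonzerov nu)%:R.
(* [p^nu] s_la, with s_la = det (h_{la_i - i + j}) (Jacobi--Trudi) *)
Definition schur_coef (la nu : seq nat) : K :=
  \sum_(s : 'S_(size la)) (-1) ^+ s *
    pprod [seq hc ((nth 0%N la (nat_of_ord i))%:Z - (nat_of_ord i)%:Z + (nat_of_ord (s i))%:Z) | i <- enum 'I_(size la)] nu.

Variables psihat yhat : nat -> nat -> K.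
(* psihat a b = [hbar^(2a) y^b] \hat psi ,  yhat a j = [hbar^(2a) z^j] \hat y *)

(* \hat y_j as a power series in hbar *)
Definition yh (j r : nat) : K := if odd r then 0 else yhat r./2 j.
Definition Ypow (nu : seq nat) : nat -> K :=
  foldr (fun j acc => smul (spow (yh j.+1) (nth 0%N nu j)) acc)
        (fun r => (r == 0%N)%:R) (iota 0 (size nu)).
(* [hbar^r] \hat psi(hbar^2, hbar c) *)
Definition psi_at (c : int) (r : nat) : K :=
  \sum_(b < r.+1) (if odd (r - b) then 0 else psihat ((r - b)./2)%N b * c%:~R ^+ b).
(* exp (sum_{(i,j) in la} \hat psi(hbar^2, hbar (i - j))) as a power series in hbar;
   (i,j) = (row, column), both starting at 1 *)
Definition Ela (la : seq nat) : nat -> K :=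
  sexp (fun r => \sum_(i < size la) \sum_(j < nth 0%N la i)
                   psi_at ((i.+1)%:Z - (j.+1)%:Z) r).

Definition vecs (D d : nat) : seq (seq nat) := [seq nu <- box (nseq D d) | weight nu == d].
(* [hbar^e p^mu] Z ;  valuation in hbar is >= - weight mu *)
Definition Zc (mu : seq nat) (e : int) : K :=
  let d := weight mu in
  \sum_(la <- partitions d) \sum_(nu <- vecs (size mu) d)
    schur_coef la mu * schur_coef la nu *
    (let r := e + (cnt nu)%:Z in if r < 0 then 0 else smul (Ypow nu) (Ela la) (absz r)).
Definition Zm1 (nu : seq nat) (e : int) : K := if nonzerov nu then Zc nu e else 0.

(* product of two Laurent series in hbar with valuations >= v1, v2 *)
Definition lmulb (v1 v2 : int) (f g : int -> K) (e : int) : K :=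
  let t := e - v1 - v2 in
  if t < 0 then 0 else
  \sum_(i < (absz t).+1) f (v1 + i%:Z) * g (v2 + ((absz t - i)%N)%:Z).
(* [hbar^e p^mu] (Z - 1)^m *)
Fixpoint Pc (m : nat) (mu : seq nat) (e : int) : K :=
  if m is m'.+1 then
    \sum_(nu <- box mu) lmulb (- (weight nu)%:Z) (- (weight (vsub mu nu))%:Z)
                              (Zm1 nu) (Pc m' (vsub mu nu)) e
  else if ~~ nonzerov mu && (e == 0) then 1 else 0.
(* [hbar^e p^mu] log Z = sum_{m>=1} (-1)^(m-1)/m (Z-1)^m ; terms m > cnt mu vanish *)
Definition logZc (mu : seq nat) (e : int) : K :=
  \sum_(1 <= m < (cnt mu).+1) ((-1) ^+ m.-1 / m%:R * Pc m mu e).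
(* [X_1^{k_1}...X_N^{k_N}] H_{g,N}
   = [hbar^{2g-2+N}] d^N log Z / dp_{k_1}...dp_{k_N} |_{p=0} *)
Definition Hc (g N : nat) (k : seq nat) : K :=
  let D := sumn k in
  let mu := [seq count_mem j.+1 k | j <- iota 0 D] in
  (\prod_(j <- mu) j`!)%N%:R * logZc mu ((2 * g)%:Z - 2 + N%:Z).

(* Series in X_1,...,X_n (exponent vector x : seq int of length n) with
   support in the cone  x_2,...,x_n >= 0,  x_1 >= -(x_2+...+x_n);
   rational functions with poles only at X_1 = X_j are expanded in the
   region |X_j| < |X_1|.                                                  *)
Definition incone (x : seq int) : bool :=
  all (fun a => 0 <= a) (behead x) && (- sumz (behead x) <= head 0 x).
Definition cunit (x : seq int) : K := (all (fun a => a == 0) x)%:R.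
Definition cmul (f g : seq int -> K) (x : seq int) : K :=
  if incone x then
    \sum_(b' <- box (map absz (behead x)))
      \sum_(b0 <- icc (- sumz (map Posz b')) (head 0 x + sumz (behead x) - sumz (map Posz b')))
        f (b0 :: map Posz b') *
        g ((head 0 x - b0) :: [seq p.1 - p.2 | p <- zip (behead x) (map Posz b')])
  else 0.
Definition cprod (fs : seq (seq int -> K)) : seq int -> K := foldr cmul cunit fs.

(* W_{g,N} = D_1...D_N H_{g,N} in the X-coordinates (D_i = X_i d/dX_i) *)
Definition Wreg (g N : nat) (x : seq int) : K :=
  if (size x == N) && all (fun a => 0 < a) x
  then Hc g N (map absz x) * \prod_(a <- x) a%:~R else 0.
(* X_1 X_2/(X_1 - X_2)^2 = sum_{k>=1} k X_2^k X_1^{-k} *)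
Definition Wsing (x : seq int) : K :=
  match x with [:: a; b] => if (0 < b) && (a == - b) then b%:~R else 0 | _ => 0 end.
Definition Wfull (g N : nat) (x : seq int) : K :=
  Wreg g N x + (if (g == 0%N) && (N == 2%N) then Wsing x else 0).
Definition genus_of (b : int) (N : nat) : option nat :=
  let t := b + 2 - N%:Z in
  if (0 <= t) && ~~ odd (absz t) then Some (absz t)./2 else None.

(* S(x) = sum_r sc r x^(2r) ; 1/S(x) = sum_t sinv t x^(2t) *)
Definition sc (r : nat) : K := ((2 ^ (2 * r) * (2 * r).+1`!)%N%:R)^-1.
Fixpoint sinv_list (t : nat) : seq K :=
  if t is t'.+1 then
    let l := sinv_list t' in rcons l (- \sum_(r <- iota 1 t) sc r * nth 0 l (t - r))
  else [:: 1].
Definition sinv (t : nat) : K := nth 0 (sinv_list t) t.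

(* r-tuples (r_1..r_k) with sum (2 r_i + 1) = m *)
Definition rtuples (k m : nat) : seq (seq nat) :=
  if (k <= m)%N && ~~ odd (m - k) then comps k (m - k)./2 else [::].
(* J : bitseq of length n-1 selecting a subset of {z_2,...,z_n} *)
Definition zero_outside (J : bitseq) (x : seq int) : bool :=
  all (fun p => p.1 || (p.2 == 0)) (zip J (behead x)).

(* [u^m hbar^a X^x] T_{|J|+1}(z_1; z_J; u), viewed in the n variables *)
Definition Tc (m : nat) (a : int) (J : bitseq) (x : seq int) : K :=
  if ~~ zero_outside J x then 0 else
  let xJ := mask J (behead x) in
  let x0 := head 0 x in
  let NJ := count id J in
  \sum_(k <- iota 1 m) (k`!%:R)^-1 *
    \sum_(r <- rtuples k m) (\prod_(ri <- r) sc ri) *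
      (let N := (k + NJ)%N in
       match genus_of (a - m%:Z) N with
       | None => 0
       | Some g =>
         if k == 1%N then x0%:~R ^+ (2 * head 0%N r) * Wfull g N (x0 :: xJ)
         else if x0 < 0 then 0 else
         \sum_(bs <- comps k (absz x0))
            (\prod_(p <- zip bs r) (p.1%:R ^+ (2 * p.2))) * Wreg g N (map Posz bs ++ xJ)
       end).

Definition blockmask (f : seq nat) (i : nat) : bitseq := [seq j == i | j <- f].
(* [u^m hbar^a X^x] sum_{l>=1} 1/l! sum_{J_1 u...u J_l} prod_i T(z_1;z_{J_i};u);
   each T is O(u) and has hbar-valuation >= -1 *)
Definition Gc (n m : nat) (a : int) (x : seq int) : K :=
  \sum_(l <- iota 1 m) (l`!%:R)^-1 *
    \sum_(f <- tuples l n.-1) \sum_(ms <- comps l m)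
      (if a + l%:Z < 0 then 0 else
       \sum_(ts <- comps l (absz (a + l%:Z)))
         cprod [seq Tc (nth 0%N ms i) ((nth 0%N ts i)%:Z - 1) (blockmask f i) | i <- iota 0 l] x).
(* [u^m hbar^a X^x] \mathcal T_n *)
Definition TTc (n m : nat) (a : int) (x : seq int) : K :=
  \sum_(r < m.+1) \sum_(t < m.+1)
    (if (2 * r + 2 * t <= m)%N then
       sc r * sinv t * (head 0 x)%:~R ^+ (2 * r) *
       Gc n (m - 2 * r - 2 * t) (a + 1 - (2 * r + 2 * t)%N%:Z) x
     else 0).

Definition Wemb (g : nat) (I : bitseq) (x : seq int) : K :=
  if zero_outside I x then Wfull g (count id I).+1 (head 0 x :: mask I (behead x)) else 0.
Definition RHSc (g n : nat) (x : seq int) : K :=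
  (if g is g'.+1 then
     (if head 0 x < 0 then 0 else
      \sum_(bs <- comps 2 (absz (head 0 x))) Wreg g' n.+1 (map Posz bs ++ behead x))
   else 0)
  + \sum_(g1 < g.+1) \sum_(I <- bitseqs n.-1) cmul (Wemb g1 I) (Wemb (g - g1) (map negb I)) x.

(* change of variables X_i = X(z_i),  X(z) = z exp(-psi(y(z)))          *)
Definition phi_ser (r : nat) : K := \sum_(b < r.+1) psihat 0 b * spow (yhat 0) b r.
(* [z^r] (X(z)/z)^e *)
Definition ecoef (e : int) (r : int) : K :=
  if r < 0 then 0 else sexp (fun s => - e%:~R * phi_ser s) (absz r).
Definition Phi (F : seq int -> K) (w : seq int) : K :=
  if incone w then
    \sum_(x' <- box (map absz (behead w)))
      \sum_(x0 <- icc (- sumz (map Posz x')) (head 0 w))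
        F (x0 :: map Posz x') * ecoef x0 (head 0 w - x0) *
        \prod_(p <- zip (behead w) x') ecoef (Posz p.2) (p.1 - Posz p.2)
  else 0.

End Defs.

From Pilot Require Import Defs.
From HB Require Import structures.
From mathcomp Require Import all_boot all_order all_fingroup all_algebra.
From mathcomp Require Import zify.
Import Order.TTheory GRing.Theory Num.Theory.
Local Open Scope ring_scope.
Set Implicit Arguments. Unset Strict Implicit.

(* At order u^2 only a few terms of the exponential-like sums survive.  The
   prefactor S(u hbar D_1) / (hbar S(u hbar)) is hbar^-1 (1 + O(u^2)) and every
   T is O(u), so [u^2] calT_n = hbar^-1 ([u^2] T_n + 1/2 sum_{J_1, J_2} [u]T [u]T).
   The k = 1 term of T gives [u] T(z_1; z_J) = hbar W_{|J|+1}(z_1, z_J), and the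
   k = 2 term gives [u^2] T_n = hbar^2/2 W_{n+1}(z_1, z_1, z_2, ...).  Matching
   the powers of hbar selects the genera (g - 1 on the diagonal, g_1 + g_2 = g
   in the products), and both contributions carry the factor 1/2 that 2!
   cancels.  The identity thus holds coefficientwise in the X-variables, hence
   also after the change of variables Phi. *)

Lemma boxS a s : box (a :: s) = [seq i :: t | i <- iota 0 a.+1, t <- box s].
Proof. by []. Qed.

Lemma compsS l t : comps l.+1 t = [seq i :: c | i <- iota 0 t.+1, c <- comps l (t - i)].
Proof. by []. Qed.

Lemma tuplesS l len : tuples l len.+1 = [seq i :: t | i <- iota 0 l, t <- tuples l len].
Proof. by []. Qed.

Lemma mem_box_le s t : t \in box s -> all2 leq t s.
Proof.
elim: s t => [|a s IH] t; first by rewrite /= inE => /eqP ->.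
rewrite boxS => /allpairsPdep [i [u [ii uu ->]]] /=.
by rewrite IH // andbT; move: ii; rewrite mem_iota.
Qed.

Lemma size_mem_box s t : t \in box s -> size t = size s.
Proof. by move/mem_box_le; rewrite all2E => /andP[/eqP]. Qed.

Lemma mem_icc lo hi x : (x \in icc lo hi) = (lo <= x <= hi).
Proof.
rewrite /icc; case: ltP => h.
  by rewrite in_nil; apply/esym/negbTE; apply/negP => /andP[]; lia.
apply/mapP/idP => [[i]|/andP[h1 h2]].
  by rewrite mem_iota => /andP[_ hi'] ->; apply/andP; split; lia.
exists (absz (x - lo)); last by lia.
by rewrite mem_iota; apply/andP; split; lia.
Qed.

Lemma icc_uniq lo hi : uniq (icc lo hi).
Proof.
rewrite /icc; case: ifP => // _.
by rewrite map_inj_uniq ?iota_uniq // => i j /addrI [].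
Qed.

Lemma tuples1 len : tuples 1 len = [:: nseq len 0%N].
Proof. by elim: len => //= len ->. Qed.

Lemma size_mem_tuples l len t : t \in tuples l len -> size t = len.
Proof.
elim: len t => [|len IH] t; first by rewrite inE => /eqP ->.
by rewrite tuplesS => /allpairsPdep [i [u [_ /IH <- ->]]].
Qed.

Lemma size_mem_bitseqs len I : I \in bitseqs len -> size I = len.
Proof. by move=> /mapP [t /size_mem_tuples <- ->]; rewrite size_map. Qed.

Section BigSums.
Variable R : nmodType.

Lemma big_comps1 (F : seq nat -> R) t : \sum_(c <- comps 1 t) F c = F [:: t].
Proof.
rewrite compsS big_allpairs_dep.
rewrite (_ : iota 0 t.+1 = index_iota 0 t.+1) // big_nat_recr //= subnn big_seq1.
rewrite big_nat big1 ?add0r // => i /andP[_ it].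
by rewrite (_ : (t - i == 0)%N = false) ?big_nil //; apply/negbTE; rewrite subn_eq0 -ltnNge.
Qed.

Lemma big_comps2 (F : seq nat -> R) t :
  \sum_(c <- comps 2 t) F c = \sum_(i < t.+1) F [:: (i : nat); (t - i)%N].
Proof.
rewrite compsS big_allpairs_dep (_ : iota 0 t.+1 = index_iota 0 t.+1) // big_mkord.
by apply: eq_bigr => i _; rewrite big_comps1.
Qed.

Lemma big_pred1_seq (I : eqType) (r : seq I) (x : I) (F : I -> R) :
  uniq r -> x \in r -> \sum_(i <- r | i == x) F i = F x.
Proof.
by move=> ur xr; rewrite -big_filter filter_pred1_uniq // big_seq1.
Qed.

Lemma big_box_pred1 (s : seq nat) (F : seq nat -> R) :
  \sum_(t <- box s | t == s) F t = F s.
Proof.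
elim: s F => [|a s IH] F; first by rewrite /= big_mkcond big_seq1 eqxx.
rewrite big_mkcond boxS big_allpairs_dep.
rewrite (eq_bigr (fun i => if i == a then F (a :: s) else 0)).
  by rewrite -big_mkcond big_pred1_seq ?iota_uniq // mem_iota add0n ltnSn.
move=> i _; case: eqP => [->|/eqP ia].
  rewrite -(IH (fun t => F (a :: t))) [RHS]big_mkcond.
  by apply: eq_bigr => t _; rewrite eqseq_cons eqxx.
by rewrite big1 // => t _; rewrite eqseq_cons (negbTE ia).
Qed.

Lemma big_tuples2_bitseqs len (F : bitseq -> bitseq -> R) :
  \sum_(t <- tuples 2 len) F [seq j == 0%N | j <- t] [seq j == 1%N | j <- t] =
  \sum_(I <- bitseqs len) F I (map negb I).
Proof.
rewrite /bitseqs big_map.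
elim: len F => [|len IH] F; first by rewrite !big_seq1.
rewrite tuplesS !big_allpairs_dep /= !big_cons !big_nil !addr0 /=.
rewrite (IH (fun I J => F (true :: I) (false :: J))).
rewrite (IH (fun I J => F (false :: I) (true :: J))).
by rewrite addrC; congr (_ + _); apply: eq_bigr => t _; rewrite -map_comp.
Qed.

Lemma big_ord_reindex_support (F : nat -> R) (h : nat -> nat) S m :
  {in gtn m &, injective h} -> {in gtn m, forall j, h j < S}%N ->
  (forall i, (i < S)%N -> F i != 0 -> exists2 j, (j < m)%N & i = h j) ->
  \sum_(i < S) F i = \sum_(j < m) F (h j).
Proof.
move=> h_inj h_lt h_onto.
transitivity (\sum_(i < S) \sum_(j < m | (i : nat) == h j) F i).
  apply: eq_bigr => i _; have [->|nz] := eqVneq (F i) 0; first by rewrite big1.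
  have [j jm ->] := h_onto i (ltn_ord i) nz.
  rewrite (big_pred1 (Ordinal jm)) // => j' /=.
  by apply/eqP/eqP => [/h_inj e|-> //]; apply: val_inj; rewrite /= e // inE.
rewrite (exchange_big_dep predT) //=; apply: eq_bigr => j _.
by rewrite (big_pred1 (Ordinal (h_lt j (ltn_ord j)))) // => i; rewrite -val_eqE.
Qed.

End BigSums.

Section ConeProduct.
Variable K : fieldType.
Implicit Types f g : seq int -> K.

Lemma cmul_ext f1 f2 g1 g2 x : f1 =1 f2 -> g1 =1 g2 -> cmul f1 g1 x = cmul f2 g2 x.
Proof.
move=> E1 E2; rewrite /cmul; case: ifP => // _.
by apply: eq_bigr => b' _; apply: eq_bigr => b0 _; rewrite E1 E2.
Qed.

Lemma cmul0l f g x : f =1 (fun=> 0) -> cmul f g x = 0.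
Proof.
move=> f0; rewrite /cmul; case: ifP => // _.
by rewrite big1 // => b' _; rewrite big1 // => b0 _; rewrite f0 mul0r.
Qed.

Lemma cmul0r f g x : g =1 (fun=> 0) -> cmul f g x = 0.
Proof.
move=> g0; rewrite /cmul; case: ifP => // _.
by rewrite big1 // => b' _; rewrite big1 // => b0 _; rewrite g0 mulr0.
Qed.

Lemma nonneg_zip_sub x' b' :
  all (fun a => 0 <= a) x' -> all2 leq b' (map absz x') ->
  all (fun a => 0 <= a) [seq p.1 - p.2 | p <- zip x' (map Posz b')] /\
  sumz [seq p.1 - p.2 | p <- zip x' (map Posz b')] = sumz x' - sumz (map Posz b').
Proof.
elim: x' b' => [|a x' IH] [|c b'] //= /andP[ha hx] /andP[hc hb].
have [-> ->] := IH b' hx hb; split; [apply/andP; split=> //|]; lia.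
Qed.

Lemma incone_cofactor x b' b0 : incone x -> b' \in box (map absz (behead x)) ->
  b0 <= head 0 x + sumz (behead x) - sumz (map Posz b') ->
  incone ((head 0 x - b0) :: [seq p.1 - p.2 | p <- zip (behead x) (map Posz b')]).
Proof.
rewrite /incone /= => /andP[hpos _] /mem_box_le hb' hb0.
have [-> ->] := nonneg_zip_sub hpos hb'; lia.
Qed.

Lemma cmul_eq_incone f g1 g2 x :
  (forall y0 y', incone (y0 :: y') -> g1 (y0 :: y') = g2 (y0 :: y')) ->
  cmul f g1 x = cmul f g2 x.
Proof.
move=> E; rewrite /cmul; case: ifP => // hx.
apply: eq_big_seq => b' hb'; apply: eq_big_seq => b0; rewrite mem_icc => /andP[_ hb0].
by rewrite E //; apply: incone_cofactor.
Qed.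

Lemma all_zip_sub_eq0 s b : size b = size s ->
  all (fun a => a == 0) [seq p.1 - p.2 | p <- zip (map Posz s) (map Posz b)] = (b == s).
Proof.
elim: s b => [|a s IH] [|c b] //= [/IH ->].
by rewrite subr_eq0 eqz_nat eqseq_cons eq_sym.
Qed.

Lemma cmulr1 f y0 y' : incone (y0 :: y') -> cmul f (cunit K) (y0 :: y') = f (y0 :: y').
Proof.
move=> hy; rewrite /cmul hy /=; move: hy; rewrite /incone /= => /andP[hpos hsum].
have [s ys] : exists s, y' = map Posz s.
  by exists (map absz y'); rewrite -map_comp map_id_in // => a /(allP hpos) /= ha; lia.
subst y'; rewrite -map_comp map_id_in //.
transitivity (\sum_(b' <- box s | b' == s) \sum_(b0 <- icc (- sumz (map Posz b'))
                (y0 + sumz (map Posz s) - sumz (map Posz b')) | b0 == y0) f (b0 :: map Posz b')).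
  rewrite [RHS]big_mkcond; apply: eq_big_seq => b' /size_mem_box hb; rewrite /cunit /=.
  rewrite all_zip_sub_eq0 //; case: eqP => bs; last by rewrite big1 // => b0 _; rewrite andbF mulr0.
  rewrite [RHS]big_mkcond; apply: eq_bigr => b0 _; rewrite subr_eq0 eq_sym andbT.
  by case: eqP; rewrite ?mulr1 ?mulr0.
by rewrite big_box_pred1 addrK big_pred1_seq ?icc_uniq // mem_icc lexx andbT.
Qed.

Lemma cmul_cmulr1 f g x : cmul f (cmul g (cunit K)) x = cmul f g x.
Proof. by apply: cmul_eq_incone => y0 y' /cmulr1. Qed.

End ConeProduct.

Lemma genus_ofP b N g : genus_of b N = Some g <-> b + 2 - N%:Z = (2 * g)%N%:Z.
Proof.
rewrite /genus_of; split=> [|->]; last by rewrite /= oddM /= mul2n doubleK.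
case: ifP => // /andP[h1 h2] [<-].
have := odd_double_half (absz (b + 2 - N%:Z)%R); rewrite (negbTE h2) add0n -mul2n => ->.
lia.
Qed.

Section Coefficients.
Variable K : fieldType.
Variables psihat yhat : nat -> nat -> K.

Local Notation Tc := (Tc psihat yhat).
Local Notation Wemb := (Wemb psihat yhat).
Local Notation Wreg := (Wreg psihat yhat).
Local Notation Gc := (Gc psihat yhat).
Local Notation TTc := (TTc psihat yhat).
Local Notation RHSc := (RHSc psihat yhat).
Local Notation Phi := (Phi psihat yhat).

Lemma Tc0 a J y : Tc 0 a J y = 0.
Proof. by rewrite /Tc big_nil if_same. Qed.

Lemma Tc1_Wemb a J y :
  Tc 1 a J y = if genus_of (a - 1) (count id J).+1 is Some g then Wemb g J y else 0.
Proof.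
rewrite /Tc /Wemb; case: zero_outside; last by case: genus_of.
rewrite big_seq1 /rtuples /= big_seq1 big_seq1 invr1 mul1r /sc /= invr1 mul1r.
by case: genus_of => // g; rewrite expr0 mul1r.
Qed.

Lemma Tc2 a J y : Tc 2 a J y =
  if zero_outside J y then 2%:R^-1 *
    if genus_of (a - 2) (count id J).+2 is Some g then
      if head 0 y < 0 then 0 else
      \sum_(bs <- comps 2 (absz (head 0 y)))
        Wreg g (count id J).+2 (map Posz bs ++ mask J (behead y))
    else 0
  else 0.
Proof.
rewrite /Tc; case: zero_outside => //; rewrite big_cons big_seq1.
have -> : rtuples 1 2 = [::] by [].
have -> : rtuples 2 2 = [:: [:: 0%N; 0%N]] by [].
rewrite big_nil mulr0 add0r big_seq1 big_cons big_seq1 /sc /= invr1 !mul1r.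
case: genus_of => // g; case: ifP => // _; congr (_ * _); apply: eq_bigr => bs _.
rewrite (_ : \prod_(p <- zip bs [:: 0%N; 0%N]) _ = 1) ?mul1r //.
by case: bs => [|b1 [|b2 [|? ?]]] /=;
  rewrite ?big_nil // !big_cons ?big_nil /= muln0 expr0 ?mul1r.
Qed.

Definition Gc_blocks n m a x l : K :=
  (l`!%:R)^-1 * \sum_(f <- tuples l n.-1) \sum_(ms <- comps l m)
    (if a + l%:Z < 0 then 0 else
     \sum_(ts <- comps l (absz (a + l%:Z)))
       Defs.cprod [seq Tc (nth 0%N ms i) ((nth 0%N ts i)%:Z - 1) (blockmask f i)
                  | i <- iota 0 l] x).

Lemma Gc_sum_blocks n m a x : Gc n m a x = \sum_(l <- iota 1 m) Gc_blocks n m a x l.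
Proof. by []. Qed.

Lemma Gc0 n a x : Gc n 0 a x = 0.
Proof. by rewrite Gc_sum_blocks big_nil. Qed.

Lemma TTc2 n a x : TTc n 2 a x = Gc n 2 (a + 1) x.
Proof.
rewrite /TTc !big_ord_recl !big_ord0 /bump /= !Gc0 !mulr0 !addr0.
by rewrite /sc /sinv /= !muln1 !expr0 !invr1 !mulr1 !mul1r.
Qed.

Lemma sum_cmul_Tc1_Wemb g n I x : (1 <= n)%N -> size I = n.-1 ->
  \sum_(i < (2 * g + 1 + n).+1)
     cmul (Tc 1 (i%:Z - 1) I) (Tc 1 ((2 * g + 1 + n - i)%N%:Z - 1) (map negb I)) x
  = \sum_(g1 < g.+1) cmul (Wemb g1 I) (Wemb (g - g1) (map negb I)) x.
Proof.
move=> hn hI; set N0 := count id I; set N1 := count id (map negb I).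
have hN : (N0 + N1)%N = n.-1 by rewrite /N0 /N1 count_map -hI -(count_predC id I).
(* The hbar-degree i of the first factor fixes its genus g1 through i = 2 g1 + 1 + |I|. *)
pose F i := cmul (Tc 1 (i%:Z - 1) I) (Tc 1 ((2 * g + 1 + n - i)%N%:Z - 1) (map negb I)) x.
rewrite (@big_ord_reindex_support _ F (fun g0 => 2 * g0 + 1 + N0)%N _ g.+1)
  => [|g1 g2 _ _|g0|i _].
- apply: eq_bigr => g0 _; have lt_g0 := ltn_ord g0.
  apply: cmul_ext => y; rewrite Tc1_Wemb.
    by rewrite (iffRL (genus_ofP _ _ g0)) //; lia.
  by rewrite (iffRL (genus_ofP _ _ (g - g0))) //; lia.
- lia.
- by rewrite inE; lia.
rewrite /F; case E0: (genus_of (i%:Z - 1 - 1) N0.+1) => [g0|]; last first.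
  by rewrite cmul0l ?eqxx // => y; rewrite Tc1_Wemb E0.
case E1: (genus_of ((2 * g + 1 + n - i)%N%:Z - 1 - 1) N1.+1) => [g1|]; last first.
  by rewrite cmul0r ?eqxx // => y; rewrite Tc1_Wemb E1.
move: E0 E1 => /genus_ofP E0 /genus_ofP E1 _; exists g0; lia.
Qed.

Lemma Gc_blocks1 g n x0 x' : size x' = n.-1 -> (1 <= n)%N -> incone (x0 :: x') ->
  Gc_blocks n 2 ((2 * g)%:Z - 2 + n%:Z + 1) (x0 :: x') 1 =
  2%:R^-1 * if g is g'.+1 then
    if x0 < 0 then 0 else \sum_(bs <- comps 2 (absz x0)) Wreg g' n.+1 (map Posz bs ++ x')
  else 0.
Proof.
move=> hx' hn hinc; rewrite /Gc_blocks tuples1 big_seq1.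
have -> : comps 1 2 = [:: [:: 2%N]] by [].
rewrite big_seq1 ifF; last by lia.
have -> : absz ((2 * g)%:Z - 2 + n%:Z + 1 + 1) = (2 * g + n)%N by lia.
rewrite big_comps1 [Defs.cprod _ _]/= cmulr1 // Tc2 /blockmask map_nseq eqxx count_nseq mul1n.
have -> : zero_outside (nseq n.-1 true) (x0 :: x').
  by rewrite /zero_outside /=; elim: n.-1 x' {hx' hinc} => [|k IH] [|a s] //=; apply: IH.
have -> : mask (nseq n.-1 true) x' = x' by rewrite mask_true ?hx'.
rewrite (_ : n.-1.+2 = n.+1); last by lia.
rewrite invr1 mul1r; case: g => [|g'].
  by case E: genus_of => [g0|] //; move/genus_ofP: E; lia.
by rewrite (iffRL (genus_ofP _ _ g')) //; lia.
Qed.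

Lemma Gc_blocks2 g n x : size x = n -> (1 <= n)%N ->
  Gc_blocks n 2 ((2 * g)%:Z - 2 + n%:Z + 1) x 2 =
  2%:R^-1 * \sum_(g1 < g.+1) \sum_(I <- bitseqs n.-1)
              cmul (Wemb g1 I) (Wemb (g - g1) (map negb I)) x.
Proof.
move=> hx hn; rewrite /Gc_blocks.
have -> : comps 2 2 = [:: [:: 0%N; 2%N]; [:: 1%N; 1%N]; [:: 2%N; 0%N]] by [].
congr (_ * _); set S := (2 * g + 1 + n)%N.
pose T12 (I J : bitseq) := \sum_(i < S.+1)
  cmul (Tc 1 (i%:Z - 1) I) (Tc 1 ((S - i)%N%:Z - 1) J) x.
transitivity (\sum_(f <- tuples 2 n.-1) T12 [seq j == 0%N | j <- f] [seq j == 1%N | j <- f]).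
  have -> : ((2 * g)%:Z - 2 + n%:Z + 1 + 2%:Z < 0) = false by lia.
  have -> : absz ((2 * g)%:Z - 2 + n%:Z + 1 + 2%:Z) = S by rewrite /S; lia.
  apply: eq_bigr => f _; rewrite !big_cons big_nil addr0.
  rewrite big1 ?add0r => [|ts _]; last by apply: cmul0l => y; apply: Tc0.
  rewrite [X in _ + X]big1 ?addr0 => [|ts _]; last first.
    by apply: cmul0r => y; apply: cmul0l => z; apply: Tc0.
  by rewrite big_comps2; apply: eq_bigr => i _; rewrite /= cmul_cmulr1.
rewrite (big_tuples2_bitseqs _ T12) [RHS]exchange_big.
apply: eq_big_seq => I /size_mem_bitseqs hI.
by rewrite /T12 /S sum_cmul_Tc1_Wemb.
Qed.

Lemma TTc2_RHSc g n x : (1 <= n)%N -> size x = n -> incone x ->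
  TTc n 2 ((2 * g)%:Z - 2 + n%:Z) x = 2%:R^-1 * RHSc g n x.
Proof.
case: x => [|x0 x'] hn hx hinc; first by rewrite -hx in hn.
rewrite TTc2 Gc_sum_blocks big_cons big_seq1 /RHSc mulrDr.
by congr (_ + _); [apply: Gc_blocks1; rewrite -?hx | apply: Gc_blocks2].
Qed.

Lemma Phi_eq_incone (F G : seq int -> K) w : (0 < size w)%N ->
  (forall x, size x = size w -> incone x -> F x = G x) ->
  Phi F w = Phi G w.
Proof.
move=> hw FG; rewrite /Phi; case: ifP => // _.
apply: eq_big_seq => x' /size_mem_box hx'; apply: eq_big_seq => x0.
rewrite mem_icc => /andP[h1 h2]; rewrite FG //=.
  by rewrite size_map hx' size_map size_behead prednK.
by rewrite /incone /= h1 andbT; apply/allP => a /mapP [? _ ->].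
Qed.

End Coefficients.

Theorem lemma2p18 (K : fieldType) (charK : [pchar K] =i pred0)
  (psihat yhat : nat -> nat -> K)
  (psi0 : forall a : nat, psihat a 0%N = 0) (y0 : forall a : nat, yhat a 0%N = 0)
  (g n : nat) (n_ge1 : (1 <= n)%N) (w : seq int) (hw : size w = n) :
  Phi psihat yhat (fun x => 2%:R * TTc psihat yhat n 2 ((2 * g)%:Z - 2 + n%:Z) x) w
  = Phi psihat yhat (RHSc psihat yhat g n) w.
Proof.
have two_neq0 : (2%:R : K) != 0 by rewrite (pcharf0P _).1.
apply: Phi_eq_incone; first by rewrite hw.
by move=> x hx hinc; rewrite TTc2_RHSc ?hx // mulrA mulfV ?mul1r.
Qed.
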